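(* For all $a,b\in\mathbb R$, each of the following systems has an isochronous center at the origin $O$ with zero Urabe function: (i) $\dot x=-y+axy+a^2x^2y+x^2-ax^3-a^2x^4$, $\dot y=x+3ay^2-2xy-ax^2+2a^2xy^2-4ax^2y+2x^3-2a^2x^3y+ax^4$; (ii) $\dot x=-y+axy+3a^2x^2y+x^2-ax^3-3a^2x^4$, $\dot y=x+4ay^2-2xy-\frac32ax^2+6a^2xy^2-6ax^2y+2x^3-6a^2x^3y+2ax^4$; (iii) with $K=a^2-\frac32ab+\frac12b^2$: $\dot x=-y+axy+Kx^2y+x^2-ax^3-Kx^4$, $\dot y=x+by^2-2xy+\frac{a-b}{2}x^2+2Kxy^2+2(a-b)x^2y+2x^3-2Kx^3y+(b-2a)x^4$.
   Context: For a real planar polynomial system $\dot x=-y+A(x,y)$, $\dot y=x+B(x,y)$, with $A,B$ polynomials having no terms of degree $<2$, the origin $O$ is an isochronous center if there is a punctured neighborhood of $O$ in which every orbit is a closed orbit surrounding $O$ and all these orbits have the same period. Zero Urabe function: write the system as $\dot x=p_0(x)+p_1(x)y$, $\dot y=q_0(x)+q_1(x)y+q_2(x)y^2$ ($p_0(0)=q_0(0)=0$, $p_1(0)\ne0$), where it holds that $-\frac{p_1'p_0}{p_1}+q_1+p_0'-\frac{2q_2p_0}{p_1}\equiv0$. Put $f=-\frac{q_2+p_1'}{p_1}$, $g=-\frac{q_2p_0^2}{p_1}+q_1p_0-p_1q_0$ (the change $z=p_0+p_1y$ gives $\dot x=z$, $\dot z=-g(x)-f(x)z^2$), $F(x)=\int_0^xf$,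 and $\xi$ near $0$ by $\frac12\xi(x)^2=\int_0^xg(s)e^{2F(s)}ds$, $x\xi(x)>0$ for $x\ne0$. The Urabe function of an isochronous center is the odd analytic $h$ with $\frac{\xi(x)}{1+h(\xi(x))}=g(x)e^{F(x)}$; ''zero Urabe function'' means $h\equiv0$, i.e. $\xi(x)=g(x)e^{F(x)}$ near $0$. *)

From Stdlib Require Import Reals.
Open Scope R_scope.

Definition is_solution (P Q : R -> R -> R) (x y : R -> R) : Prop :=
  forall t, derivable_pt_lim x t (P (x t) (y t)) /\
            derivable_pt_lim y t (Q (x t) (y t)).

(* O is an isochronous center: there is a punctured neighbourhood
   0 < |p| < delta of O such that the orbit through every p in it is a
   closed orbit (periodic solution, minimal period T, T common to all)
   surrounding O (nonzero winding number around O, expressed through a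
   continuous polar angle theta: over one period theta changes). *)
Definition isochronous_center (P Q : R -> R -> R) : Prop :=
  exists delta T : R, 0 < delta /\ 0 < T /\
    forall x0 y0 : R, 0 < x0 ^ 2 + y0 ^ 2 < delta ^ 2 ->
      exists x y theta r : R -> R,
        is_solution P Q x y /\ x 0 = x0 /\ y 0 = y0 /\
        (forall t, x (t + T) = x t /\ y (t + T) = y t) /\
        (forall s, 0 < s < T -> ~ (x s = x0 /\ y s = y0)) /\
        continuity theta /\
        (forall t, 0 < r t /\ x t = r t * cos (theta t) /\
                   y t = r t * sin (theta t)) /\
        theta T <> theta 0.

Definition xi_of (G : R -> R) (x : R) : R :=
  if Rle_dec 0 x then sqrt (2 * G x) else - sqrt (2 * G x).

(* Zero Urabe function, for a system written as
     x' = p0(x) + p1(x) y,  y' = q0(x) + q1(x) y + q2(x) y^2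
   (this decomposition is unique for P affine in y, Q quadratic in y).
   F(x) = int_0^x f and G(x) = int_0^x g e^{2F} are given as the
   antiderivatives vanishing at 0 on a neighbourhood (-delta, delta). *)
Definition zero_urabe (P Q : R -> R -> R) : Prop :=
  exists (p0 p1 q0 q1 q2 dp0 dp1 F G : R -> R) (delta : R),
    (forall x y, P x y = p0 x + p1 x * y) /\
    (forall x y, Q x y = q0 x + q1 x * y + q2 x * y ^ 2) /\
    p0 0 = 0 /\ q0 0 = 0 /\ p1 0 <> 0 /\
    (forall x, derivable_pt_lim p0 x (dp0 x)) /\
    (forall x, derivable_pt_lim p1 x (dp1 x)) /\
    0 < delta /\
    let f := fun x => - (q2 x + dp1 x) / p1 x in
    let g := fun x => - q2 x * p0 x ^ 2 / p1 x + q1 x * p0 x - p1 x * q0 x in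
    F 0 = 0 /\ G 0 = 0 /\
    forall x, - delta < x < delta ->
      p1 x <> 0 /\
      - dp1 x * p0 x / p1 x + q1 x + dp0 x - 2 * q2 x * p0 x / p1 x = 0 /\
      derivable_pt_lim F x (f x) /\
      derivable_pt_lim G x (g x * exp (2 * F x)) /\
      0 <= G x /\
      (x <> 0 -> 0 < x * xi_of G x) /\
      xi_of G x = g x * exp (F x).

Definition P1 (a : R) (x y : R) : R :=
  - y + a * x * y + a ^ 2 * x ^ 2 * y + x ^ 2 - a * x ^ 3 - a ^ 2 * x ^ 4.
Definition Q1 (a : R) (x y : R) : R :=
  x + 3 * a * y ^ 2 - 2 * x * y - a * x ^ 2 + 2 * a ^ 2 * x * y ^ 2
  - 4 * a * x ^ 2 * y + 2 * x ^ 3 - 2 * a ^ 2 * x ^ 3 * y + a * x ^ 4.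

Definition P2 (a : R) (x y : R) : R :=
  - y + a * x * y + 3 * a ^ 2 * x ^ 2 * y + x ^ 2 - a * x ^ 3 - 3 * a ^ 2 * x ^ 4.
Definition Q2 (a : R) (x y : R) : R :=
  x + 4 * a * y ^ 2 - 2 * x * y - 3 / 2 * a * x ^ 2 + 6 * a ^ 2 * x * y ^ 2
  - 6 * a * x ^ 2 * y + 2 * x ^ 3 - 6 * a ^ 2 * x ^ 3 * y + 2 * a * x ^ 4.

Definition K3 (a b : R) : R := a ^ 2 - 3 / 2 * a * b + 1 / 2 * b ^ 2.
Definition P3 (a b : R) (x y : R) : R :=
  - y + a * x * y + K3 a b * x ^ 2 * y + x ^ 2 - a * x ^ 3 - K3 a b * x ^ 4.
Definition Q3 (a b : R) (x y : R) : R :=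
  x + b * y ^ 2 - 2 * x * y + (a - b) / 2 * x ^ 2 + 2 * K3 a b * x * y ^ 2
  + 2 * (a - b) * x ^ 2 * y + 2 * x ^ 3 - 2 * K3 a b * x ^ 3 * y
  + (b - 2 * a) * x ^ 4.

(* With f = -(q2 + p1')/p1, F' = f and g as in the definition of the Urabe function, the
   change z = p0 + p1 y brings the system to x' = z, z' = -g(x) - f(x) z^2, and a zero Urabe
   function means that xi = g e^F satisfies xi' = e^F.  Then (X, Y) = (xi(x), e^F(x) z) obeys
   X' = Y, Y' = -X: near O the system is conjugate to the linear center, whose orbits are
   circles traversed in time 2 pi.  Pulling these circles back through the conjugacy gives
   closed orbits of period 2 pi; an angle along them is measured from the rotating direction
   (X, -Y), with which (x, y) makes an acute angle.  For system (iii), p1 = -w with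
   w = 1 - a x - K x^2, g = w x (1 + (a - b) x / 2), and g' + f g = 1 is a polynomial identity;
   systems (i) and (ii) are (iii) with b = 3 a and b = 4 a. *)

From Stdlib Require Import Reals Ranalysis5 Ratan Lra Psatz ClassicalEpsilon FunctionalExtensionality.
Open Scope R_scope.

Lemma D_eq f x l1 l2 : derivable_pt_lim f x l1 -> l1 = l2 -> derivable_pt_lim f x l2.
Proof. now intros H <-. Qed.

Lemma D_const c x : derivable_pt_lim (fun _ => c) x 0.
Proof. apply derivable_pt_lim_const. Qed.

Lemma D_id x : derivable_pt_lim (fun t => t) x 1.
Proof. apply derivable_pt_lim_id. Qed.

Lemma D_plus f g x lf lg : derivable_pt_lim f x lf -> derivable_pt_lim g x lg ->
  derivable_pt_lim (fun t => f t + g t) x (lf + lg).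
Proof. apply derivable_pt_lim_plus. Qed.

Lemma D_minus f g x lf lg : derivable_pt_lim f x lf -> derivable_pt_lim g x lg ->
  derivable_pt_lim (fun t => f t - g t) x (lf - lg).
Proof. apply derivable_pt_lim_minus. Qed.

Lemma D_opp f x lf : derivable_pt_lim f x lf -> derivable_pt_lim (fun t => - f t) x (- lf).
Proof. apply derivable_pt_lim_opp. Qed.

Lemma D_mult f g x lf lg : derivable_pt_lim f x lf -> derivable_pt_lim g x lg ->
  derivable_pt_lim (fun t => f t * g t) x (lf * g x + f x * lg).
Proof. apply derivable_pt_lim_mult. Qed.

Lemma D_div f g x lf lg : derivable_pt_lim f x lf -> derivable_pt_lim g x lg -> g x <> 0 ->
  derivable_pt_lim (fun t => f t / g t) x ((lf * g x - lg * f x) / g x ^ 2).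
Proof.
  intros Hf Hg Hg0. eapply D_eq; [exact (derivable_pt_lim_div f g x lf lg Hf Hg Hg0)|].
  unfold Rsqr; simpl; rewrite Rmult_1_r; reflexivity.
Qed.

Lemma D_comp f g x lf lg : derivable_pt_lim f x lf -> derivable_pt_lim g (f x) lg ->
  derivable_pt_lim (fun t => g (f t)) x (lg * lf).
Proof. intros Hf Hg; exact (derivable_pt_lim_comp f g x lf lg Hf Hg). Qed.

Lemma D_pow f n x lf : derivable_pt_lim f x lf ->
  derivable_pt_lim (fun t => f t ^ n) x (INR n * f x ^ pred n * lf).
Proof. intros H. apply (D_comp f (fun y => y ^ n)); [exact H | apply derivable_pt_lim_pow]. Qed.

Lemma D_exp f x lf : derivable_pt_lim f x lf ->
  derivable_pt_lim (fun t => exp (f t)) x (exp (f x) * lf).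
Proof. intros H. apply (D_comp f exp); [exact H | apply derivable_pt_lim_exp]. Qed.

Lemma D_cos f x lf : derivable_pt_lim f x lf ->
  derivable_pt_lim (fun t => cos (f t)) x (- sin (f x) * lf).
Proof. intros H. apply (D_comp f cos); [exact H | apply derivable_pt_lim_cos]. Qed.

Lemma D_sin f x lf : derivable_pt_lim f x lf ->
  derivable_pt_lim (fun t => sin (f t)) x (cos (f x) * lf).
Proof. intros H. apply (D_comp f sin); [exact H | apply derivable_pt_lim_sin]. Qed.

(* D_div is tried before D_mult, which would also match x / y = x * / y. *)
Ltac derive_rules :=
  repeat first [ apply D_const | apply D_id | apply D_plus | apply D_minus | apply D_opp
               | apply D_div | apply D_mult | apply D_pow | apply D_exp | apply D_cos
               | apply D_sin ].

Lemma derivable_pt_lim_continuous f x l : derivable_pt_lim f x l -> continuity_pt f x.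
Proof. intros H. apply derivable_continuous_pt. exists l. exact H. Qed.

(** * Inverse of a function with positive derivative *)

(* Outside [phi lo, phi hi] the value is an unspecified choice. *)
Definition inv_on (phi : R -> R) (lo hi X : R) : R :=
  epsilon (inhabits 0) (fun x => lo <= x <= hi /\ phi x = X).

Section InverseOn.
Variables (phi dphi : R -> R) (lo hi : R).
Hypothesis lo_lt_hi : lo < hi.
Hypothesis phi_deriv : forall x, lo <= x <= hi -> derivable_pt_lim phi x (dphi x).
Hypothesis dphi_pos : forall x, lo <= x <= hi -> 0 < dphi x.

Lemma strict_incr_of_pos_deriv x y : lo <= x -> x < y -> y <= hi -> phi x < phi y.
Proof.
  intros Hx Hxy Hy.
  destruct (MVT_cor2 phi dphi x y Hxy) as [c [Hc Hcxy]].
  { intros c Hc. apply phi_deriv. lra. }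
  assert (0 < dphi c) by (apply dphi_pos; lra). nra.
Qed.

Lemma inj_of_pos_deriv x y : lo <= x <= hi -> lo <= y <= hi -> phi x = phi y -> x = y.
Proof.
  intros Hx Hy E. destruct (Rtotal_order x y) as [h|[h|h]]; [| exact h |].
  - pose proof (strict_incr_of_pos_deriv x y ltac:(lra) h ltac:(lra)). lra.
  - pose proof (strict_incr_of_pos_deriv y x ltac:(lra) h ltac:(lra)). lra.
Qed.

Lemma continuity_of_deriv_on x : lo <= x <= hi -> continuity_pt phi x.
Proof. intros Hx. exact (derivable_pt_lim_continuous _ _ _ (phi_deriv x Hx)). Qed.

Lemma inv_on_spec X : phi lo <= X <= phi hi ->
  lo <= inv_on phi lo hi X <= hi /\ phi (inv_on phi lo hi X) = X.
Proof.
  intros HX. unfold inv_on. apply epsilon_spec.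
  destruct (f_interv_is_interv phi lo hi X lo_lt_hi HX continuity_of_deriv_on) as [x Hx].
  now exists x.
Qed.

Lemma range_of_pos_deriv x : lo <= x <= hi -> phi lo <= phi x <= phi hi.
Proof.
  intros Hx. split.
  - destruct (Req_dec x lo) as [->|n]; [lra|]. left. apply strict_incr_of_pos_deriv; lra.
  - destruct (Req_dec x hi) as [->|n]; [lra|]. left. apply strict_incr_of_pos_deriv; lra.
Qed.

Lemma inv_on_cancel x : lo <= x <= hi -> inv_on phi lo hi (phi x) = x.
Proof.
  intros Hx. destruct (inv_on_spec (phi x) (range_of_pos_deriv x Hx)) as [Hin Heq].
  exact (inj_of_pos_deriv _ _ Hin Hx Heq).
Qed.

Lemma inv_on_deriv X : phi lo < X < phi hi ->
  derivable_pt_lim (inv_on phi lo hi) X (/ dphi (inv_on phi lo hi X)).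
Proof.
  intros HX. set (psi := inv_on phi lo hi).
  assert (Hspec : forall Y, phi lo <= Y <= phi hi -> lo <= psi Y <= hi /\ phi (psi Y) = Y)
    by exact inv_on_spec.
  assert (Hends : psi (phi lo) = lo /\ psi (phi hi) = hi)
    by (split; apply inv_on_cancel; lra).
  assert (Hin : lo <= psi X <= hi) by (apply Hspec; lra).
  assert (Prf : forall x, psi (phi lo) <= x <= psi (phi hi) -> derivable_pt phi x).
  { intros x Hx. exists (dphi x). apply phi_deriv. lra. }
  assert (Hcont : continuity_pt psi X).
  { apply (continuity_pt_recip_interv phi psi lo hi lo_lt_hi strict_incr_of_pos_deriv).
    - intros Y h1 h2. unfold comp, id. apply Hspec. lra.
    - intros Y h1 h2. apply Hspec. lra.
    - exact continuity_of_deriv_on.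
    - lra. }
  assert (Hrange : psi (phi lo) <= psi X <= psi (phi hi)) by lra.
  assert (Hd : derive_pt phi (psi X) (Prf (psi X) Hrange) = dphi (psi X))
    by (apply derive_pt_eq_0; apply phi_deriv; exact Hin).
  eapply D_eq.
  - apply (derivable_pt_lim_recip_interv phi psi (phi lo) (phi hi) X Prf Hcont); try lra.
    + intros Y HY. unfold comp, id. apply Hspec. lra.
    + rewrite Hd. apply Rgt_not_eq, dphi_pos, Hin.
  - rewrite Hd. unfold Rdiv. ring.
Qed.

End InverseOn.

Lemma antiderivative_exists (f : R -> R) (lo hi x0 : R) :
  lo <= x0 <= hi -> (forall x, lo <= x <= hi -> continuity_pt f x) ->
  exists F, F x0 = 0 /\ forall x, lo <= x <= hi -> derivable_pt_lim F x (f x).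
Proof.
  intros Hx0 Hf. assert (h : lo <= hi) by lra.
  set (Pr := primitive h (FTC_P1 h Hf)).
  exists (fun x => Pr x - Pr x0). split; [ring|].
  intros x Hx. eapply D_eq; [apply D_minus; [exact (RiemannInt_P28 h Hf Hx) | apply D_const]|].
  ring.
Qed.

(** * The linear center *)

Definition rot_x (X0 Y0 t : R) : R := X0 * cos t + Y0 * sin t.
Definition rot_y (X0 Y0 t : R) : R := Y0 * cos t - X0 * sin t.

Lemma rot_x_deriv X0 Y0 t : derivable_pt_lim (rot_x X0 Y0) t (rot_y X0 Y0 t).
Proof. unfold rot_x, rot_y. eapply D_eq; [derive_rules|]. cbv beta. ring. Qed.

Lemma rot_y_deriv X0 Y0 t : derivable_pt_lim (rot_y X0 Y0) t (- rot_x X0 Y0 t).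
Proof. unfold rot_x, rot_y. eapply D_eq; [derive_rules|]. cbv beta. ring. Qed.

Lemma rot_norm X0 Y0 t : rot_x X0 Y0 t ^ 2 + rot_y X0 Y0 t ^ 2 = X0 ^ 2 + Y0 ^ 2.
Proof.
  unfold rot_x, rot_y. pose proof (sin2_cos2 t) as H. unfold Rsqr in H.
  transitivity ((X0 ^ 2 + Y0 ^ 2) * (sin t * sin t + cos t * cos t)); [ring|].
  rewrite H. ring.
Qed.

Lemma rot_at_0 X0 Y0 : rot_x X0 Y0 0 = X0 /\ rot_y X0 Y0 0 = Y0.
Proof. unfold rot_x, rot_y. rewrite cos_0, sin_0. split; ring. Qed.

Lemma rot_periodic X0 Y0 t :
  rot_x X0 Y0 (t + 2 * PI) = rot_x X0 Y0 t /\ rot_y X0 Y0 (t + 2 * PI) = rot_y X0 Y0 t.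
Proof. unfold rot_x, rot_y. rewrite cos_plus, sin_plus, cos_2PI, sin_2PI. split; ring. Qed.

Lemma rot_no_return X0 Y0 s : 0 < X0 ^ 2 + Y0 ^ 2 -> 0 < s < 2 * PI ->
  ~ (rot_x X0 Y0 s = X0 /\ rot_y X0 Y0 s = Y0).
Proof.
  intros HR Hs [Hx Hy]. unfold rot_x, rot_y in Hx, Hy.
  (* the rotation fixes a nonzero vector only if cos s = 1 and sin s = 0 *)
  assert (Hc : (X0 ^ 2 + Y0 ^ 2) * (cos s - 1) = 0).
  { transitivity (X0 * (X0 * cos s + Y0 * sin s - X0) + Y0 * (Y0 * cos s - X0 * sin s - Y0));
      [ring|]. rewrite Hx, Hy. ring. }
  assert (Hsn : (X0 ^ 2 + Y0 ^ 2) * sin s = 0).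
  { transitivity (Y0 * (X0 * cos s + Y0 * sin s - X0) - X0 * (Y0 * cos s - X0 * sin s - Y0));
      [ring|]. rewrite Hx, Hy. ring. }
  apply Rmult_integral in Hc as [Hc|Hc]; [lra|].
  apply Rmult_integral in Hsn as [Hsn|Hsn]; [lra|].
  pose proof PI_RGT_0.
  destruct (Rtotal_order s PI) as [h|[h|h]].
  - pose proof (sin_gt_0 s ltac:(lra) h). lra.
  - subst s. rewrite cos_PI in Hc. lra.
  - pose proof (sin_lt_0 s h ltac:(lra)). lra.
Qed.

Lemma unit_vector_angle u v : u ^ 2 + v ^ 2 = 1 -> exists beta, cos beta = u /\ sin beta = v.
Proof.
  intros H. assert (Hu : -1 <= u <= 1) by nra.
  assert (Hs : 1 - u² = v ^ 2) by (unfold Rsqr; lra).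
  destruct (Rle_dec 0 v) as [Hv|Hv].
  - exists (acos u). rewrite cos_acos, sin_acos, Hs, sqrt_pow2; auto.
  - exists (- acos u). rewrite cos_neg, sin_neg, cos_acos, sin_acos, Hs by exact Hu.
    replace (v ^ 2) with ((- v) ^ 2) by ring. rewrite sqrt_pow2; lra.
Qed.

Lemma rot_phase X0 Y0 : 0 < X0 ^ 2 + Y0 ^ 2 ->
  exists beta, forall t, rot_x X0 Y0 t = sqrt (X0 ^ 2 + Y0 ^ 2) * cos (t + beta) /\
                         rot_y X0 Y0 t = - sqrt (X0 ^ 2 + Y0 ^ 2) * sin (t + beta).
Proof.
  intros HR. set (r := sqrt (X0 ^ 2 + Y0 ^ 2)).
  assert (Hr : 0 < r) by (apply sqrt_lt_R0; exact HR).
  assert (Hr2 : r ^ 2 = X0 ^ 2 + Y0 ^ 2) by (apply pow2_sqrt; lra).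
  destruct (unit_vector_angle (X0 / r) (- Y0 / r)) as [beta [Hc Hs]].
  { replace ((X0 / r) ^ 2 + (- Y0 / r) ^ 2) with ((X0 ^ 2 + Y0 ^ 2) / r ^ 2) by (field; lra).
    rewrite Hr2. field. lra. }
  exists beta. intros t. unfold rot_x, rot_y. rewrite cos_plus, sin_plus, Hc, Hs.
  split; field; lra.
Qed.

(** * Continuous polar angle *)

Lemma C_plus f g x : continuity_pt f x -> continuity_pt g x ->
  continuity_pt (fun t => f t + g t) x.
Proof. apply continuity_pt_plus. Qed.

Lemma C_minus f g x : continuity_pt f x -> continuity_pt g x ->
  continuity_pt (fun t => f t - g t) x.
Proof. apply continuity_pt_minus. Qed.

Lemma C_mult f g x : continuity_pt f x -> continuity_pt g x ->
  continuity_pt (fun t => f t * g t) x.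
Proof. apply continuity_pt_mult. Qed.

Lemma C_div f g x : continuity_pt f x -> continuity_pt g x -> g x <> 0 ->
  continuity_pt (fun t => f t / g t) x.
Proof. apply continuity_pt_div. Qed.

Lemma C_comp f g x : continuity_pt f x -> continuity g ->
  continuity_pt (fun t => g (f t)) x.
Proof. intros Hf Hg. exact (continuity_pt_comp f g x Hf (Hg (f x))). Qed.

Lemma continuity_atan : continuity atan.
Proof. intros x. exact (derivable_pt_lim_continuous _ _ _ (derivable_pt_lim_atan x)). Qed.

Section PolarLift.
Variables x y phi : R -> R.

Definition along t := x t * cos (phi t) + y t * sin (phi t).
Definition across t := y t * cos (phi t) - x t * sin (phi t).

(* While (x, y) makes an acute angle with the direction phi, its polar angle is phi plus
   the arctangent of the ratio of its coordinates in the frame rotated by phi. *)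
Definition polar_lift t := phi t + atan (across t / along t).
Definition polar_radius t := sqrt (x t ^ 2 + y t ^ 2).

Hypothesis along_pos : forall t, 0 < along t.

Lemma polar_lift_continuous :
  continuity x -> continuity y -> continuity phi -> continuity polar_lift.
Proof.
  intros Hx Hy Hphi t.
  specialize (Hx t). specialize (Hy t).
  assert (Hcs : continuity_pt (fun s => cos (phi s)) t /\ continuity_pt (fun s => sin (phi s)) t)
    by (split; apply C_comp; auto using continuity_cos, continuity_sin).
  assert (Hal : continuity_pt along t) by (apply C_plus; apply C_mult; easy).
  assert (Hac : continuity_pt across t) by (apply C_minus; apply C_mult; easy).
  apply C_plus; [apply Hphi|]. apply C_comp; [|exact continuity_atan].
  apply C_div; [exact Hac | exact Hal | apply Rgt_not_eq, along_pos].
Qed.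

Lemma polar_lift_repr t :
  0 < polar_radius t /\ x t = polar_radius t * cos (polar_lift t) /\
  y t = polar_radius t * sin (polar_lift t).
Proof.
  pose proof (along_pos t) as HD. pose proof (sin2_cos2 (phi t)) as Hsc. unfold Rsqr in Hsc.
  set (D := along t) in *. set (C := across t).
  set (c := cos (phi t)) in *. set (s := sin (phi t)) in *.
  assert (HDC : D ^ 2 + C ^ 2 = x t ^ 2 + y t ^ 2).
  { unfold D, C, along, across. fold c s.
    transitivity ((x t ^ 2 + y t ^ 2) * (s * s + c * c)); [ring|]. rewrite Hsc. ring. }
  assert (Hr2 : polar_radius t ^ 2 = D ^ 2 + C ^ 2).
  { unfold polar_radius. rewrite pow2_sqrt; nra. }
  assert (Hr : 0 < polar_radius t).
  { unfold polar_radius. apply sqrt_lt_R0. nra. }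
  assert (Hsq : sqrt (1 + (C / D)²) = polar_radius t / D).
  { rewrite <- sqrt_pow2 by (apply Rlt_le, Rdiv_lt_0_compat; lra). f_equal.
    unfold Rsqr. field_simplify_eq; [|lra]. rewrite Hr2. ring. }
  unfold polar_lift. fold D C.
  rewrite cos_plus, sin_plus, cos_atan, sin_atan, Hsq. fold c s.
  assert (Ex : x t = c * D - s * C).
  { unfold D, C, along, across. fold c s.
    transitivity (x t * (s * s + c * c)); [rewrite Hsc; ring | ring]. }
  assert (Ey : y t = s * D + c * C).
  { unfold D, C, along, across. fold c s.
    transitivity (y t * (s * s + c * c)); [rewrite Hsc; ring | ring]. }
  split; [exact Hr|]. rewrite Ex at 1. rewrite Ey at 1. split; field; lra.
Qed.

Lemma polar_lift_turn t1 t2 : x t2 = x t1 -> y t2 = y t1 -> phi t2 = phi t1 + 2 * PI ->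
  polar_lift t2 = polar_lift t1 + 2 * PI.
Proof.
  intros Hx Hy Hphi.
  unfold polar_lift, along, across. rewrite Hx, Hy, Hphi, cos_plus, sin_plus, cos_2PI, sin_2PI.
  replace (cos (phi t1) * 1 - sin (phi t1) * 0) with (cos (phi t1)) by ring.
  replace (sin (phi t1) * 1 + cos (phi t1) * 0) with (sin (phi t1)) by ring.
  ring.
Qed.

End PolarLift.

(** * Linearization of a system with zero Urabe function *)

Definition urabe_f (p1 q2 dp1 : R -> R) (x : R) : R := - (q2 x + dp1 x) / p1 x.
Definition urabe_g (p0 p1 q0 q1 q2 : R -> R) (x : R) : R :=
  - q2 x * p0 x ^ 2 / p1 x + q1 x * p0 x - p1 x * q0 x.

(* The change z = p0 + p1 y turns the system into x' = z, z' = - g(x) - f(x) z^2. *)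
Lemma urabe_reduction p0 p1 dp0 dp1 q0 q1 q2 y : p1 <> 0 ->
  - dp1 * p0 / p1 + q1 + dp0 - 2 * q2 * p0 / p1 = 0 ->
  p1 * (q0 + q1 * y + q2 * y ^ 2) + (dp0 + dp1 * y) * (p0 + p1 * y)
  + - (q2 + dp1) / p1 * (p0 + p1 * y) ^ 2
  = - (- q2 * p0 ^ 2 / p1 + q1 * p0 - p1 * q0).
Proof.
  intros Hp1 Hcond. apply Rminus_diag_uniq.
  transitivity ((p0 + p1 * y) * (- dp1 * p0 / p1 + q1 + dp0 - 2 * q2 * p0 / p1));
    [field; exact Hp1|].
  rewrite Hcond. ring.
Qed.

Definition closed_orbit (P Q : R -> R -> R) (T x0 y0 : R) : Prop :=
  exists x y theta r : R -> R,
    is_solution P Q x y /\ x 0 = x0 /\ y 0 = y0 /\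
    (forall t, x (t + T) = x t /\ y (t + T) = y t) /\
    (forall s, 0 < s < T -> ~ (x s = x0 /\ y s = y0)) /\
    continuity theta /\
    (forall t, 0 < r t /\ x t = r t * cos (theta t) /\ y t = r t * sin (theta t)) /\
    theta T <> theta 0.

Lemma solution_continuous P Q x y : is_solution P Q x y -> continuity x /\ continuity y.
Proof.
  intros H. split; intros t; eapply derivable_pt_lim_continuous; apply (H t).
Qed.

Section Linearization.
Variables (p0 p1 dp0 dp1 q0 q1 q2 F : R -> R) (P Q : R -> R -> R) (lo hi rho : R).

Let f := urabe_f p1 q2 dp1.
Let g := urabe_g p0 p1 q0 q1 q2.
Let xi x := g x * exp (F x).

Hypothesis P_def : forall x y, P x y = p0 x + p1 x * y.
Hypothesis Q_def : forall x y, Q x y = q0 x + q1 x * y + q2 x * y ^ 2.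
Hypothesis p0_0 : p0 0 = 0.
Hypothesis q0_0 : q0 0 = 0.
Hypothesis lo_lt_hi : lo < hi.
Hypothesis p0_deriv : forall x, lo <= x <= hi -> derivable_pt_lim p0 x (dp0 x).
Hypothesis p1_deriv : forall x, lo <= x <= hi -> derivable_pt_lim p1 x (dp1 x).
Hypothesis p1_neq0 : forall x, lo <= x <= hi -> p1 x <> 0.
Hypothesis urabe_condition : forall x, lo <= x <= hi ->
  - dp1 x * p0 x / p1 x + q1 x + dp0 x - 2 * q2 x * p0 x / p1 x = 0.
Hypothesis F_deriv : forall x, lo <= x <= hi -> derivable_pt_lim F x (f x).
Hypothesis xi_deriv : forall x, lo <= x <= hi -> derivable_pt_lim xi x (exp (F x)).
Hypothesis rho_pos : 0 < rho.
Hypothesis rho_inside : xi lo < - rho /\ rho < xi hi.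
Hypothesis half_plane : forall x y, lo <= x <= hi -> x <> 0 \/ y <> 0 ->
  0 < x * xi x - y * (exp (F x) * P x y).

Lemma lift_reduced_solution (x z : R -> R) t : lo <= x t <= hi ->
  derivable_pt_lim x t (z t) ->
  derivable_pt_lim z t (- g (x t) - f (x t) * z t ^ 2) ->
  derivable_pt_lim (fun s => (z s - p0 (x s)) / p1 (x s)) t
    (Q (x t) ((z t - p0 (x t)) / p1 (x t))).
Proof.
  intros Hx Dx Dz. pose proof (p1_neq0 _ Hx) as Hp1.
  eapply D_eq.
  - apply D_div; [apply D_minus; [exact Dz|] | |exact Hp1];
      apply (D_comp x); [exact Dx | apply p0_deriv, Hx | exact Dx | apply p1_deriv, Hx].
  - set (y := (z t - p0 (x t)) / p1 (x t)).
    assert (Hz : z t = p0 (x t) + p1 (x t) * y) by (unfold y; field; exact Hp1).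
    pose proof (urabe_reduction (p0 (x t)) (p1 (x t)) (dp0 (x t)) (dp1 (x t))
                  (q0 (x t)) (q1 (x t)) (q2 (x t)) y Hp1 (urabe_condition _ Hx)) as Hred.
    rewrite <- Hz in Hred. rewrite Q_def.
    apply (Rmult_eq_reg_l (p1 (x t))); [|exact Hp1].
    unfold g, f, urabe_g, urabe_f in *.
    replace (p1 (x t) * (q0 (x t) + q1 (x t) * y + q2 (x t) * y ^ 2)) with
      (- (- q2 (x t) * p0 (x t) ^ 2 / p1 (x t) + q1 (x t) * p0 (x t) - p1 (x t) * q0 (x t))
       - (dp0 (x t) + dp1 (x t) * y) * z t - - (q2 (x t) + dp1 (x t)) / p1 (x t) * z t ^ 2)
      by lra.
    rewrite Hz at 2. unfold y. field. exact Hp1.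
Qed.

Lemma urabe_g_0 : g 0 = 0.
Proof. unfold g, urabe_g. rewrite p0_0, q0_0. unfold Rdiv. ring. Qed.

Section Orbit.
Variables X0 Y0 : R.
Hypothesis orbit_small : X0 ^ 2 + Y0 ^ 2 < rho ^ 2.

(* The circle through (X0, Y0) pulled back through (x, y) |-> (xi x, e^F(x) P x y). *)
Definition orbit_x t := inv_on xi lo hi (rot_x X0 Y0 t).
Definition orbit_z t := rot_y X0 Y0 t / exp (F (orbit_x t)).
Definition orbit_y t := (orbit_z t - p0 (orbit_x t)) / p1 (orbit_x t).

Lemma rot_x_inside t : xi lo < rot_x X0 Y0 t < xi hi.
Proof.
  pose proof (rot_norm X0 Y0 t). pose proof (pow2_ge_0 (rot_y X0 Y0 t)).
  assert (Hr : rot_x X0 Y0 t ^ 2 < rho ^ 2) by lra.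
  destruct rho_inside. split; nra.
Qed.

Lemma orbit_x_spec t : lo <= orbit_x t <= hi /\ xi (orbit_x t) = rot_x X0 Y0 t.
Proof.
  apply (inv_on_spec xi (fun x => exp (F x))); auto using exp_pos.
  pose proof (rot_x_inside t). lra.
Qed.

Lemma orbit_x_deriv t : derivable_pt_lim orbit_x t (orbit_z t).
Proof.
  eapply D_eq.
  - apply (D_comp (rot_x X0 Y0)); [apply rot_x_deriv|].
    apply (inv_on_deriv xi (fun x => exp (F x))); auto using exp_pos, rot_x_inside.
  - unfold orbit_z, orbit_x. field. apply Rgt_not_eq, exp_pos.
Qed.

Lemma orbit_z_deriv t :
  derivable_pt_lim orbit_z t (- g (orbit_x t) - f (orbit_x t) * orbit_z t ^ 2).
Proof.
  destruct (orbit_x_spec t) as [Hin Hxi]. pose proof (exp_pos (F (orbit_x t))) as HE.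
  eapply D_eq.
  - apply D_div; [apply rot_y_deriv | | lra].
    apply D_exp, (D_comp orbit_x); [apply orbit_x_deriv | apply F_deriv, Hin].
  - rewrite <- Hxi. unfold orbit_z, xi. field. lra.
Qed.

Lemma orbit_P t : P (orbit_x t) (orbit_y t) = orbit_z t.
Proof.
  rewrite P_def. unfold orbit_y. field. apply p1_neq0, orbit_x_spec.
Qed.

Lemma orbit_solution : is_solution P Q orbit_x orbit_y.
Proof.
  intros t. rewrite orbit_P. split; [apply orbit_x_deriv|].
  apply lift_reduced_solution; [apply orbit_x_spec | apply orbit_x_deriv | apply orbit_z_deriv].
Qed.

Lemma orbit_coords t : rot_x X0 Y0 t = xi (orbit_x t) /\
  rot_y X0 Y0 t = exp (F (orbit_x t)) * P (orbit_x t) (orbit_y t).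
Proof.
  split; [symmetry; apply orbit_x_spec|].
  rewrite orbit_P. unfold orbit_z. field. apply Rgt_not_eq, exp_pos.
Qed.

Lemma orbit_periodic t : orbit_x (t + 2 * PI) = orbit_x t /\ orbit_y (t + 2 * PI) = orbit_y t.
Proof.
  unfold orbit_y, orbit_z, orbit_x. destruct (rot_periodic X0 Y0 t) as [-> ->]. auto.
Qed.

Lemma orbit_start x0 y0 : lo <= x0 <= hi -> X0 = xi x0 -> Y0 = exp (F x0) * P x0 y0 ->
  orbit_x 0 = x0 /\ orbit_y 0 = y0.
Proof.
  intros Hx0 HX HY. destruct (rot_at_0 X0 Y0) as [HX0 HY0].
  assert (Hx : orbit_x 0 = x0).
  { unfold orbit_x. rewrite HX0, HX.
    apply (inv_on_cancel xi (fun x => exp (F x))); auto using exp_pos. }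
  split; [exact Hx|].
  unfold orbit_y, orbit_z. rewrite Hx, HY0, HY, P_def.
  pose proof (p1_neq0 x0 Hx0). pose proof (exp_pos (F x0)). field. split; lra.
Qed.

Hypothesis orbit_nonzero : 0 < X0 ^ 2 + Y0 ^ 2.

Lemma orbit_no_return s : 0 < s < 2 * PI ->
  ~ (orbit_x s = orbit_x 0 /\ orbit_y s = orbit_y 0).
Proof.
  intros Hs [Ex Ey]. apply (rot_no_return X0 Y0 s orbit_nonzero Hs).
  destruct (rot_at_0 X0 Y0) as [Hx0 Hy0].
  destruct (orbit_coords s) as [-> ->]. destruct (orbit_coords 0) as [Hc0 Hd0].
  rewrite Ex, Ey, <- Hc0, <- Hd0. auto.
Qed.

Lemma orbit_along_pos t : 0 < orbit_x t * rot_x X0 Y0 t - orbit_y t * rot_y X0 Y0 t.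
Proof.
  destruct (orbit_coords t) as [Hc Hd]. rewrite Hc, Hd.
  apply half_plane; [apply orbit_x_spec|].
  destruct (Req_dec (orbit_x t) 0) as [Hx|Hx]; [|now left].
  destruct (Req_dec (orbit_y t) 0) as [Hy|Hy]; [|now right].
  exfalso. pose proof (rot_norm X0 Y0 t) as Hn.
  rewrite Hc, Hd, Hx, Hy, P_def, p0_0 in Hn. unfold xi in Hn. rewrite urabe_g_0 in Hn.
  lra.
Qed.

Lemma orbit_rotating_frame :
  exists beta, forall t, 0 < along orbit_x orbit_y (fun s => s + beta) t.
Proof.
  destruct (rot_phase X0 Y0 orbit_nonzero) as [beta Hbeta]. exists beta. intros t.
  pose proof (orbit_along_pos t) as H. destruct (Hbeta t) as [Ex Ey]. rewrite Ex, Ey in H.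
  pose proof (sqrt_lt_R0 _ orbit_nonzero). unfold along. nra.
Qed.

End Orbit.

Theorem closed_orbit_of_linearization x0 y0 : lo <= x0 <= hi -> x0 <> 0 \/ y0 <> 0 ->
  xi x0 ^ 2 + (exp (F x0) * P x0 y0) ^ 2 < rho ^ 2 ->
  closed_orbit P Q (2 * PI) x0 y0.
Proof.
  intros Hx0 Hnz Hsmall.
  set (X0 := xi x0) in *. set (Y0 := exp (F x0) * P x0 y0) in *.
  assert (HR : 0 < X0 ^ 2 + Y0 ^ 2).
  { pose proof (half_plane x0 y0 Hx0 Hnz) as H. fold X0 Y0 in H.
    destruct (Rle_lt_dec (X0 ^ 2 + Y0 ^ 2) 0) as [h|h]; [|exact h].
    assert (X0 = 0) by nra. assert (Y0 = 0) by nra. subst. nra. }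
  destruct (orbit_start X0 Y0 x0 y0 Hx0 eq_refl eq_refl) as [Hstart_x Hstart_y].
  destruct (orbit_rotating_frame X0 Y0 Hsmall HR) as [beta Halong].
  set (phi := fun t => t + beta) in Halong.
  destruct (solution_continuous _ _ _ _ (orbit_solution X0 Y0 Hsmall)) as [Cx Cy].
  exists (orbit_x X0 Y0), (orbit_y X0 Y0), (polar_lift (orbit_x X0 Y0) (orbit_y X0 Y0) phi),
    (polar_radius (orbit_x X0 Y0) (orbit_y X0 Y0)).
  split; [apply orbit_solution, Hsmall|].
  split; [exact Hstart_x|]. split; [exact Hstart_y|].
  split; [apply orbit_periodic|].
  split; [intros s Hs; rewrite <- Hstart_x, <- Hstart_y; apply orbit_no_return; assumption|].
  split.
  { apply polar_lift_continuous; auto.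
    intros t. apply derivable_pt_lim_continuous with 1.
    unfold phi. eapply D_eq; [derive_rules|]. ring. }
  split; [intros t; apply polar_lift_repr, Halong|].
  rewrite (polar_lift_turn _ _ _ 0 (2 * PI)).
  - pose proof PI_RGT_0. lra.
  - rewrite <- (Rplus_0_l (2 * PI)) at 1. apply orbit_periodic.
  - rewrite <- (Rplus_0_l (2 * PI)) at 1. apply orbit_periodic.
  - unfold phi. ring.
Qed.

End Linearization.

(** * System (iii) *)

Lemma xi_of_half_square (h : R -> R) x : h 0 = 0 -> (x <> 0 -> 0 < x * h x) ->
  xi_of (fun t => h t ^ 2 / 2) x = h x.
Proof.
  intros H0 Hsign. unfold xi_of. replace (2 * (h x ^ 2 / 2)) with (h x ^ 2) by field.
  destruct (Req_dec x 0) as [->|Hx].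
  - rewrite H0. replace (0 ^ 2) with 0 by ring. rewrite sqrt_0.
    destruct (Rle_dec 0 0); lra.
  - specialize (Hsign Hx). destruct (Rle_dec 0 x) as [Hle|Hlt].
    + apply sqrt_pow2. nra.
    + replace (h x ^ 2) with ((- h x) ^ 2) by ring. rewrite sqrt_pow2; nra.
Qed.

Lemma mul_abs_bound u x d : - d <= x <= d -> - (Rabs u * d) <= u * x <= Rabs u * d.
Proof.
  intros Hx. destruct (Rcase_abs u) as [Hu|Hu];
    [rewrite Rabs_left by exact Hu | rewrite Rabs_right by exact Hu]; split; nra.
Qed.

Section SystemIII.
Variables a b : R.

Definition sys_w x := 1 - a * x - K3 a b * x ^ 2.
Definition sys_p0 x := x ^ 2 * sys_w x.
Definition sys_p1 x := - sys_w x.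
Definition sys_dp0 x := 2 * x - 3 * a * x ^ 2 - 4 * K3 a b * x ^ 3.
Definition sys_dp1 x := a + 2 * K3 a b * x.
Definition sys_q0 x := x + (a - b) / 2 * x ^ 2 + 2 * x ^ 3 + (b - 2 * a) * x ^ 4.
Definition sys_q1 x := - 2 * x + 2 * (a - b) * x ^ 2 - 2 * K3 a b * x ^ 3.
Definition sys_q2 x := b + 2 * K3 a b * x.

Notation f := (urabe_f sys_p1 sys_q2 sys_dp1).
Notation g := (urabe_g sys_p0 sys_p1 sys_q0 sys_q1 sys_q2).

Lemma P3_decomp x y : P3 a b x y = sys_p0 x + sys_p1 x * y.
Proof. unfold P3, sys_p0, sys_p1, sys_w. ring. Qed.

Lemma Q3_decomp x y : Q3 a b x y = sys_q0 x + sys_q1 x * y + sys_q2 x * y ^ 2.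
Proof. unfold Q3, sys_q0, sys_q1, sys_q2. ring. Qed.

Lemma sys_p0_deriv x : derivable_pt_lim sys_p0 x (sys_dp0 x).
Proof. unfold sys_p0, sys_w, sys_dp0. eapply D_eq; [derive_rules|]. simpl. ring. Qed.

Lemma sys_p1_deriv x : derivable_pt_lim sys_p1 x (sys_dp1 x).
Proof. unfold sys_p1, sys_w, sys_dp1. eapply D_eq; [derive_rules|]. simpl. ring. Qed.

Lemma sys_condition x : sys_w x <> 0 ->
  - sys_dp1 x * sys_p0 x / sys_p1 x + sys_q1 x + sys_dp0 x - 2 * sys_q2 x * sys_p0 x / sys_p1 x = 0.
Proof.
  intros Hw. unfold sys_p1, sys_p0, sys_dp1, sys_dp0, sys_q1, sys_q2. field. exact Hw.
Qed.

Lemma sys_f_eq x : sys_w x <> 0 -> f x = (a + b + 4 * K3 a b * x) / sys_w x.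
Proof. intros Hw. unfold urabe_f, sys_q2, sys_dp1, sys_p1. field. exact Hw. Qed.

Lemma sys_g_eq x : sys_w x <> 0 -> g x = sys_w x * (x * (1 + (a - b) / 2 * x)).
Proof.
  intros Hw. unfold urabe_g, sys_p0, sys_p1, sys_q0, sys_q1, sys_q2.
  field_simplify_eq; [|exact Hw]. unfold sys_w, K3. ring.
Qed.

(* g' + f g = 1 is the zero Urabe function property (g e^F)' = e^F. *)
Lemma sys_g_deriv x : sys_w x <> 0 ->
  exists dg, derivable_pt_lim g x dg /\ dg + f x * g x = 1.
Proof.
  intros Hw. eexists. split.
  - unfold urabe_g, sys_p0, sys_p1, sys_q0, sys_q1, sys_q2, sys_w. derive_rules.
    unfold sys_w in Hw. lra.
  - rewrite sys_f_eq, sys_g_eq by exact Hw. unfold sys_p0, sys_p1, sys_q0, sys_q1, sys_q2.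
    cbv beta. unfold sys_w, K3 in *. simpl in *. field. lra.
Qed.

Definition radius := / (4 * (Rabs a + Rabs (K3 a b) + Rabs ((a - b) / 2) + 2)).

Lemma radius_bounds : 0 < radius <= 1 / 8.
Proof.
  unfold radius. pose proof (Rabs_pos a). pose proof (Rabs_pos (K3 a b)).
  pose proof (Rabs_pos ((a - b) / 2)).
  split; [apply Rinv_0_lt_compat; lra|].
  replace (1 / 8) with (/ 8) by field. apply Rinv_le_contravar; lra.
Qed.

Lemma nbhd_bounds x : - radius <= x <= radius ->
  3 / 4 <= sys_w x <= 5 / 4 /\ 3 / 4 <= 1 + (a - b) / 2 * x <= 5 / 4 /\ x ^ 2 <= 1 / 64.
Proof.
  intros Hx. destruct radius_bounds as [Hr0 Hr1].
  pose proof (Rabs_pos a); pose proof (Rabs_pos (K3 a b)); pose proof (Rabs_pos ((a - b) / 2)).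
  assert (HS : 4 * (Rabs a + Rabs (K3 a b) + Rabs ((a - b) / 2) + 2) * radius = 1)
    by (unfold radius; field; lra).
  assert (Hx2 : - radius <= x ^ 2 <= radius) by nra.
  pose proof (mul_abs_bound a x radius Hx). pose proof (mul_abs_bound (K3 a b) (x ^ 2) radius Hx2).
  pose proof (mul_abs_bound ((a - b) / 2) x radius Hx).
  unfold sys_w. repeat split; nra.
Qed.

Lemma sys_w_pos x : - radius <= x <= radius -> 0 < sys_w x.
Proof. intros Hx. destruct (nbhd_bounds x Hx). lra. Qed.

Lemma sys_f_continuous x : - radius <= x <= radius -> continuity_pt f x.
Proof.
  intros Hx. pose proof (sys_w_pos x Hx) as Hw.
  eapply derivable_pt_lim_continuous.
  unfold urabe_f, sys_q2, sys_dp1, sys_p1, sys_w. derive_rules.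
  unfold sys_w in Hw. lra.
Qed.

Section WithF.
Variable F : R -> R.
Hypothesis F_deriv : forall x, - radius <= x <= radius -> derivable_pt_lim F x (f x).

Definition sys_xi x := g x * exp (F x).

Lemma sys_xi_eq x : - radius <= x <= radius ->
  sys_xi x = sys_w x * (x * (1 + (a - b) / 2 * x)) * exp (F x).
Proof. intros Hx. unfold sys_xi. rewrite sys_g_eq; [reflexivity|]. apply Rgt_not_eq, sys_w_pos, Hx. Qed.

Lemma sys_xi_deriv x : - radius <= x <= radius -> derivable_pt_lim sys_xi x (exp (F x)).
Proof.
  intros Hx. destruct (sys_g_deriv x) as [dg [Hdg Hid]]; [apply Rgt_not_eq, sys_w_pos, Hx|].
  eapply D_eq; [apply D_mult; [exact Hdg | apply D_exp, F_deriv, Hx]|].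
  transitivity (exp (F x) * (dg + f x * g x)); [ring|]. rewrite Hid. ring.
Qed.

Lemma exp_F_bounds : exists Em EM, 0 < Em /\
  forall x, - radius <= x <= radius -> Em <= exp (F x) <= EM.
Proof.
  destruct radius_bounds as [Hr _].
  assert (Hc : forall x, - radius <= x <= radius -> continuity_pt (fun t => exp (F t)) x)
    by (intros x Hx; eapply derivable_pt_lim_continuous; apply D_exp, F_deriv, Hx).
  destruct (continuity_ab_min _ (- radius) radius ltac:(lra) Hc) as [xm [Hmin _]].
  destruct (continuity_ab_maj _ (- radius) radius ltac:(lra) Hc) as [xM [Hmax _]].
  exists (exp (F xm)), (exp (F xM)). split; [apply exp_pos|]. auto.
Qed.

(* x xi(x) - y e^F P = e^F w ((y - x^2/2)^2 + x^2 (1 + (a - b) x / 2 - x^2/4)) *)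
Lemma sys_half_plane x y : - radius <= x <= radius -> x <> 0 \/ y <> 0 ->
  0 < x * sys_xi x - y * (exp (F x) * P3 a b x y).
Proof.
  intros Hx Hnz. destruct (nbhd_bounds x Hx) as [Hw [Hc Hx2]].
  pose proof (exp_pos (F x)) as HE.
  rewrite sys_xi_eq by exact Hx. rewrite P3_decomp. unfold sys_p0, sys_p1.
  replace (x * (sys_w x * (x * (1 + (a - b) / 2 * x)) * exp (F x)) -
           y * (exp (F x) * (x ^ 2 * sys_w x + - sys_w x * y)))
    with (exp (F x) * sys_w x * (x ^ 2 * (1 + (a - b) / 2 * x) - y * x ^ 2 + y ^ 2)) by ring.
  apply Rmult_lt_0_compat; [nra|].
  destruct Hnz as [Hnz|Hnz]; pose proof (Rsqr_pos_lt _ Hnz); unfold Rsqr in *;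
    pose proof (pow2_ge_0 (y - x ^ 2 / 2)); nra.
Qed.

Section Bounds.
Variables Em EM : R.
Hypothesis Em_pos : 0 < Em.
Hypothesis exp_F_between : forall x, - radius <= x <= radius -> Em <= exp (F x) <= EM.

Lemma sys_xi_ends : sys_xi (- radius) < - (radius * Em / 2) /\ radius * Em / 2 < sys_xi radius.
Proof.
  destruct radius_bounds as [Hr _].
  assert (Hm : - radius <= - radius <= radius) by lra.
  assert (Hp : - radius <= radius <= radius) by lra.
  destruct (nbhd_bounds _ Hm) as [Hw1 [Hc1 _]]. destruct (nbhd_bounds _ Hp) as [Hw2 [Hc2 _]].
  pose proof (exp_F_between _ Hm). pose proof (exp_F_between _ Hp).
  rewrite !sys_xi_eq by assumption.
  assert (Huv1 : 9 / 16 * Em <= sys_w (- radius) * (1 + (a - b) / 2 * - radius) * exp (F (- radius)))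
    by (apply Rmult_le_compat; nra).
  assert (Huv2 : 9 / 16 * Em <= sys_w radius * (1 + (a - b) / 2 * radius) * exp (F radius))
    by (apply Rmult_le_compat; nra).
  split; nra.
Qed.

(* On the strip (xi x0)^2 + (e^F P)^2 <= 4 EM^2 (x0^2 + y0^2), whence the radius of the disk. *)
Lemma sys_start_in_disk x0 y0 : x0 ^ 2 + y0 ^ 2 < (radius * Em / (4 * EM)) ^ 2 ->
  - radius <= x0 <= radius /\
  sys_xi x0 ^ 2 + (exp (F x0) * P3 a b x0 y0) ^ 2 < (radius * Em / 2) ^ 2.
Proof.
  intros Hsmall. destruct radius_bounds as [Hr Hr8].
  assert (H0 : - radius <= 0 <= radius) by lra.
  pose proof (exp_F_between 0 H0) as HEm.
  assert (Hdelta : (radius * Em / (4 * EM)) ^ 2 <= (radius / 4) ^ 2).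
  { apply pow_incr. split; [apply Rlt_le, Rdiv_lt_0_compat; nra|].
    apply (Rmult_le_reg_r (4 * EM)); [lra|]. field_simplify; nra. }
  assert (Hx0 : - radius <= x0 <= radius) by nra.
  split; [exact Hx0|].
  destruct (nbhd_bounds x0 Hx0) as [Hw [Hu Hx2]]. pose proof (exp_F_between x0 Hx0) as HE.
  rewrite sys_xi_eq, P3_decomp by exact Hx0. unfold sys_p0, sys_p1.
  set (E := exp (F x0)) in *. set (w := sys_w x0) in *. set (u := 1 + (a - b) / 2 * x0) in *.
  assert (HX2 : (w * (x0 * u) * E) ^ 2 <= 3 * EM ^ 2 * x0 ^ 2).
  { replace ((w * (x0 * u) * E) ^ 2) with ((w * u) ^ 2 * E ^ 2 * x0 ^ 2) by ring.
    apply Rmult_le_compat_r; [apply pow2_ge_0|].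
    assert (Hwu : 0 <= w * u <= 25 / 16) by nra.
    apply Rmult_le_compat; try apply pow2_ge_0; nra. }
  assert (HY2 : (E * (x0 ^ 2 * w + - w * y0)) ^ 2 <= EM ^ 2 * (x0 ^ 2 / 16 + 4 * y0 ^ 2)).
  { replace ((E * (x0 ^ 2 * w + - w * y0)) ^ 2) with (E ^ 2 * (w ^ 2 * (x0 ^ 2 - y0) ^ 2)) by ring.
    assert (Hw2 : w ^ 2 <= 2) by nra.
    assert (Hq : (x0 ^ 2 - y0) ^ 2 <= x0 ^ 2 / 32 + 2 * y0 ^ 2).
    { assert (x0 ^ 2 * x0 ^ 2 <= x0 ^ 2 / 64) by nra.
      pose proof (pow2_ge_0 (x0 ^ 2 + y0)). nra. }
    apply Rmult_le_compat; [apply pow2_ge_0 | | nra |].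
    - apply Rmult_le_pos; apply pow2_ge_0.
    - replace (x0 ^ 2 / 16 + 4 * y0 ^ 2) with (2 * (x0 ^ 2 / 32 + 2 * y0 ^ 2)) by field.
      apply Rmult_le_compat; try apply pow2_ge_0; lra. }
  assert (Hgoal : (radius * Em / 2) ^ 2 = 4 * EM ^ 2 * (radius * Em / (4 * EM)) ^ 2)
    by (field; lra).
  rewrite Hgoal.
  assert (HEM : 0 < EM ^ 2) by (apply pow_lt; lra).
  assert (0 <= EM ^ 2 * x0 ^ 2) by (apply Rmult_le_pos; [lra | apply pow2_ge_0]).
  assert (4 * EM ^ 2 * (x0 ^ 2 + y0 ^ 2) < 4 * EM ^ 2 * (radius * Em / (4 * EM)) ^ 2)
    by (apply Rmult_lt_compat_l; lra).
  lra.
Qed.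

End Bounds.

Lemma sys_isochronous : isochronous_center (P3 a b) (Q3 a b).
Proof.
  destruct exp_F_bounds as [Em [EM [HEm HE]]].
  destruct radius_bounds as [Hr _]. pose proof PI_RGT_0.
  assert (HEM : Em <= EM) by (destruct (HE 0); lra).
  exists (radius * Em / (4 * EM)), (2 * PI).
  split; [apply Rdiv_lt_0_compat; nra|]. split; [lra|].
  intros x0 y0 [Hpos Hsmall].
  destruct (sys_start_in_disk Em EM HEm HE x0 y0 Hsmall) as [Hx0 Hxi].
  apply (closed_orbit_of_linearization sys_p0 sys_p1 sys_dp0 sys_dp1 sys_q0 sys_q1 sys_q2 F
           (P3 a b) (Q3 a b) (- radius) radius (radius * Em / 2));
    auto using P3_decomp, Q3_decomp, sys_p0_deriv, sys_p1_deriv, sys_xi_deriv, sys_half_plane.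
  - unfold sys_p0. ring.
  - unfold sys_q0. ring.
  - lra.
  - intros x Hx. unfold sys_p1. apply Ropp_neq_0_compat, Rgt_not_eq, sys_w_pos, Hx.
  - intros x Hx. apply sys_condition, Rgt_not_eq, sys_w_pos, Hx.
  - nra.
  - exact (sys_xi_ends Em EM HEm HE).
  - destruct (Req_dec x0 0) as [->|Hx]; [right|left]; [intros ->; lra | exact Hx].
Qed.

Lemma sys_zero_urabe : F 0 = 0 -> zero_urabe (P3 a b) (Q3 a b).
Proof.
  intros HF0. destruct radius_bounds as [Hr _].
  exists sys_p0, sys_p1, sys_q0, sys_q1, sys_q2, sys_dp0, sys_dp1, F,
    (fun x => sys_xi x ^ 2 / 2), radius.
  assert (Hxi0 : sys_xi 0 = 0).
  { unfold sys_xi. rewrite (urabe_g_0 sys_p0 sys_p1 sys_q0 sys_q1 sys_q2);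
      [ring | unfold sys_p0; ring | unfold sys_q0; ring]. }
  split; [exact P3_decomp|]. split; [exact Q3_decomp|].
  split; [unfold sys_p0; ring|]. split; [unfold sys_q0; ring|].
  split; [unfold sys_p1, sys_w; lra|].
  split; [exact sys_p0_deriv|]. split; [exact sys_p1_deriv|]. split; [exact Hr|].
  cbv zeta. split; [exact HF0|]. split; [rewrite Hxi0; field|].
  intros x Hx. assert (Hxr : - radius <= x <= radius) by lra.
  pose proof (sys_w_pos x Hxr) as Hw.
  assert (Hsign : x <> 0 -> 0 < x * sys_xi x).
  { intros Hx0. pose proof (sys_half_plane x 0 Hxr (or_introl Hx0)). lra. }
  split; [unfold sys_p1; lra|].
  split; [apply sys_condition; lra|].
  split; [exact (F_deriv x Hxr)|].
  split.
  { eapply D_eq; [apply D_div; [apply D_pow, sys_xi_deriv, Hxr | apply D_const | lra]|].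
    unfold sys_xi. replace (2 * F x) with (F x + F x) by ring. rewrite exp_plus.
    unfold urabe_g. simpl. field. unfold sys_p1. lra. }
  split; [pose proof (pow2_ge_0 (sys_xi x)); lra|].
  rewrite xi_of_half_square by assumption. split; [exact Hsign | reflexivity].
Qed.

End WithF.

Lemma sys_isochronous_zero_urabe : isochronous_center (P3 a b) (Q3 a b) /\ zero_urabe (P3 a b) (Q3 a b).
Proof.
  destruct radius_bounds as [Hr _].
  destruct (antiderivative_exists f (- radius) radius 0 ltac:(lra) sys_f_continuous)
    as [F [HF0 HF]].
  split; [apply (sys_isochronous F HF) | apply (sys_zero_urabe F HF HF0)].
Qed.

End SystemIII.

Lemma P1_as_P3 a : P1 a = P3 a (3 * a).
Proof. do 2 (apply functional_extensionality; intro). unfold P1, P3, K3. field. Qed.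

Lemma Q1_as_Q3 a : Q1 a = Q3 a (3 * a).
Proof. do 2 (apply functional_extensionality; intro). unfold Q1, Q3, K3. field. Qed.

Lemma P2_as_P3 a : P2 a = P3 a (4 * a).
Proof. do 2 (apply functional_extensionality; intro). unfold P2, P3, K3. field. Qed.

Lemma Q2_as_Q3 a : Q2 a = Q3 a (4 * a).
Proof. do 2 (apply functional_extensionality; intro). unfold Q2, Q3, K3. field. Qed.

Theorem theorem4p2 (a b : R) :
  (isochronous_center (P1 a) (Q1 a) /\ zero_urabe (P1 a) (Q1 a)) /\
  (isochronous_center (P2 a) (Q2 a) /\ zero_urabe (P2 a) (Q2 a)) /\
  (isochronous_center (P3 a b) (Q3 a b) /\ zero_urabe (P3 a b) (Q3 a b)).
Proof.
  rewrite P1_as_P3, Q1_as_Q3, P2_as_P3, Q2_as_Q3.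
  split; [|split]; apply sys_isochronous_zero_urabe.
Qed.
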